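(* Let $n\equiv 1 \pmod 4$ with $n\ge 5$, and suppose there exists a reverse Gray code for the permutations of $\{1,\ldots,n-1\}$ with property $P$. Then there exists a reverse Gray code for the permutations of $\{1,\ldots,n\}$.
   Context: A reverse Gray code for the permutations of $\{1,\ldots,m\}$ is a listing $\pi_0,\ldots,\pi_{m!-1}$ of all permutations of $\{1,\ldots,m\}$ written as words, such that consecutive permutations differ by interchanging the symbols in two adjacent positions, and $\pi_{i+m!/2}$ is the reversal of $\pi_i$ (the word read backwards) for all $0\le i<m!/2$. Such a code has property $P$ if $\pi_0=12\cdots m$ and the four permutations immediately preceding $\pi_{m!/2}$ are, in order, $(m-1)(m-2)(m-3)\,m\,(m-4)\cdots 3\,1\,2$, then $(m-1)(m-2)\,m\,(m-3)(m-4)\cdots 3\,1\,2$, then $(m-1)\,m\,(m-2)(m-3)(m-4)\cdots 3\,1\,2$, then $m(m-1)(m-2)(m-3)(m-4)\cdots 3\,1\,2$. *)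

From mathcomp Require Import all_boot.
Set Implicit Arguments. Unset Strict Implicit. Unset Printing Implicit Defensive.

Definition swap_adj (i : nat) (s : seq nat) : seq nat :=
  set_nth 0 (set_nth 0 s i (nth 0 s i.+1)) i.+1 (nth 0 s i).

Definition adj_transp (s t : seq nat) : Prop :=
  exists i, i.+1 < size s /\ t = swap_adj i s.

Definition is_perm_word (m : nat) (s : seq nat) : bool := perm_eq s (iota 1 m).

Definition reverse_gray_code (m : nat) (L : seq (seq nat)) : Prop :=
  [/\ size L = m`!, uniq L, all (is_perm_word m) L,
      (forall i, i.+1 < size L -> adj_transp (nth [::] L i) (nth [::] L i.+1)) &
      (forall i, i < m`! %/ 2 ->
         nth [::] L (i + m`! %/ 2) = rev (nth [::] L i))].

Definition tailP (m : nat) : seq nat := rev (iota 3 (m - 6)) ++ [:: 1; 2].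

Definition wP1 m := [:: m.-1; m - 2; m - 3; m] ++ tailP m.
Definition wP2 m := [:: m.-1; m - 2; m; m - 3] ++ tailP m.
Definition wP3 m := [:: m.-1; m; m - 2; m - 3] ++ tailP m.
Definition wP4 m := [:: m; m.-1; m - 2; m - 3] ++ tailP m.

Definition propertyP (m : nat) (L : seq (seq nat)) : Prop :=
  [/\ nth [::] L 0 = iota 1 m,
      nth [::] L (m`! %/ 2 - 4) = wP1 m,
      nth [::] L (m`! %/ 2 - 3) = wP2 m,
      nth [::] L (m`! %/ 2 - 2) = wP3 m &
      nth [::] L (m`! %/ 2 - 1) = wP4 m].

(* Let h = m!/2 and let L_i be the words of the given code for m.  Inserting the letter m+1 at position k
   of L_i, for 0 <= i < h and 0 <= k <= m, turns a path through the grid [0, h) x [0, m] into a list of words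
   of length m+1: a step in k is an adjacent transposition, and so is a step from row i to row i+1 while m+1
   sits at either end, since L_i and L_(i+1) differ by one.  These words followed by their reversals form a
   reverse Gray code for m+1 as soon as the path is Hamiltonian, starts at (0, m) and ends at (h-1, 0): the
   reversal of the first word is L_h with m+1 in front, adjacent to the last word, and reversed words come
   from the rows h, ..., m!-1.  Since h is even, a row-by-row snake from (0, m) ends in column m; property P
   repairs this, as it makes each of L_(h-3), L_(h-2), L_(h-1) an explicit swap of its predecessor, so the
   path may also change rows in interior columns of the last four rows and finish at (h-1, 0). *)

From mathcomp Require Import all_boot zify.

Set Implicit Arguments.
Unset Strict Implicit.
Unset Printing Implicit Defensive.

Lemma swap_adj_cons i x s : swap_adj i.+1 (x :: s) = x :: swap_adj i s.
Proof. by []. Qed.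

Lemma swap_adj_cat l u v r : swap_adj (size l) (l ++ u :: v :: r) = l ++ v :: u :: r.
Proof. by elim: l => //= x l IH; rewrite swap_adj_cons IH. Qed.

Lemma split_adj i (s : seq nat) : i.+1 < size s ->
  exists l u v r, s = l ++ u :: v :: r /\ size l = i.
Proof.
move=> lt_i; exists (take i s), (nth 0 s i), (nth 0 s i.+1), (drop i.+2 s); split.
  by rewrite -[LHS](cat_take_drop i) (drop_nth 0) ?(drop_nth 0 (n := i.+1)) //; lia.
by rewrite size_takel //; lia.
Qed.

Lemma adj_transp_sym s t : adj_transp s t -> adj_transp t s.
Proof.
move=> [i [/split_adj [l [u [v [r [-> <-]]]]] ->]].
exists (size l); rewrite swap_adj_cat size_cat swap_adj_cat /=; split=> //; lia.
Qed.

Lemma adj_transp_rev s t : adj_transp s t -> adj_transp (rev s) (rev t).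
Proof.
move=> [i [/split_adj [l [u [v [r [-> <-]]]]] ->]].
exists (size (rev r)); rewrite swap_adj_cat !rev_cat !size_cat /=.
rewrite !rev_cons -!cats1 -!catA /= swap_adj_cat !size_cat !size_rev /=; split=> //; lia.
Qed.

Definition ins (a k : nat) (p : seq nat) : seq nat := take k p ++ a :: drop k p.

Lemma ins_cons a k x p : ins a k.+1 (x :: p) = x :: ins a k p.
Proof. by []. Qed.

Lemma size_ins a k p : size (ins a k p) = (size p).+1.
Proof. by rewrite /ins size_cat /= size_take size_drop; case: ifP; lia. Qed.

Lemma perm_ins a k p : perm_eq (ins a k p) (a :: p).
Proof. by rewrite /ins -cat1s perm_catCA cat_take_drop. Qed.

Lemma rev_ins a k p : k <= size p -> rev (ins a k p) = ins a (size p - k) (rev p).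
Proof.
move=> le_k; rewrite /ins rev_cat rev_cons -cats1 -catA /= take_rev drop_rev.
by have -> : size p - (size p - k) = k by lia.
Qed.

Lemma ins_succ a k p : k < size p -> ins a k.+1 p = swap_adj k (ins a k p).
Proof.
elim: p k => [|x p IH] [|k] //= lt_k.
  by rewrite /ins /= take0 drop0.
by rewrite 2!ins_cons swap_adj_cons IH.
Qed.

Lemma ins_swap_adj_le a k i p : k <= i -> i.+1 < size p ->
  ins a k (swap_adj i p) = swap_adj i.+1 (ins a k p).
Proof.
elim: k i p => [|k IH] i p le_ki lt_i; first by rewrite /ins !take0 !drop0.
by case: p lt_i => [|x p] //; case: i le_ki => [|i] // le_ki lt_i; rewrite swap_adj_cons !ins_cons IH.
Qed.

Lemma ins_swap_adj_gt a k i p : i.+1 < k -> k <= size p ->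
  ins a k (swap_adj i p) = swap_adj i (ins a k p).
Proof.
elim: i k p => [|i IH] k p lt_ik le_k.
  by case: p le_k => [|x [|y p]] //=; case: k lt_ik => [|[|k]].
by case: p le_k => [|x p] //; case: k lt_ik => [|k] // lt_ik le_k; rewrite swap_adj_cons !ins_cons IH.
Qed.

Lemma adj_transp_ins_succ a k p : k < size p -> adj_transp (ins a k p) (ins a k.+1 p).
Proof. by move=> lt_k; exists k; rewrite size_ins ins_succ. Qed.

Lemma adj_transp_ins a k i p : i.+1 < size p -> k <= size p -> k != i.+1 ->
  adj_transp (ins a k p) (ins a k (swap_adj i p)).
Proof.
move=> lt_i le_k ne_k; case: (leqP k i) => [le_ki | lt_ik].
  by exists i.+1; rewrite size_ins ins_swap_adj_le.
have lt_i1k : i.+1 < k by rewrite ltn_neqAle eq_sym ne_k.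
by exists i; rewrite size_ins ins_swap_adj_gt //; split=> //; lia.
Qed.

Lemma index_ins a k p : a \notin p -> k <= size p -> index a (ins a k p) = k.
Proof.
move=> a_p le_k; rewrite /ins index_cat /= eqxx addn0 size_takel //.
by rewrite (negbTE (contra (@mem_take _ _ _ _) a_p)).
Qed.

Lemma ins_inj a k k' p p' : a \notin p -> a \notin p' -> k <= size p -> k' <= size p' ->
  ins a k p = ins a k' p' -> k = k' /\ p = p'.
Proof.
move=> a_p a_p' le_k le_k' eq_ins.
have eq_k : k = k' by have := congr1 (index a) eq_ins; rewrite !index_ins.
subst k'; split=> //.
have del q : k <= size q -> q = take k (ins a k q) ++ drop k.+1 (ins a k q).
  move=> le_kq; rewrite /ins drop_cat size_takel // ltnNge leqnSn /= subSnn /= drop0.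
  by rewrite take_size_cat ?size_takel ?cat_take_drop.
by rewrite (del p le_k) (del p' le_k') eq_ins.
Qed.

Lemma is_perm_word_ins m k p : is_perm_word m p -> is_perm_word m.+1 (ins m.+1 k p).
Proof.
move=> pw; rewrite /is_perm_word (perm_trans (perm_ins _ _ _)) //.
by rewrite -addn1 iotaD perm_sym perm_catC /= addnC perm_cons perm_sym.
Qed.

Lemma reverse_gray_code_of_half m H :
  size H * 2 = m`! -> all (is_perm_word m) H -> uniq H ->
  {in H, forall w, rev w \notin H} ->
  (forall i, i.+1 < size H -> adj_transp (nth [::] H i) (nth [::] H i.+1)) ->
  adj_transp (last [::] H) (rev (head [::] H)) ->
  reverse_gray_code m (H ++ map rev H).
Proof.
move=> sz_H perm_H uniq_H rev_H adj_H adj_mid.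
have half : m`! %/ 2 = size H by rewrite -sz_H mulnK.
have H_gt0 : 0 < size H by have := fact_gt0 m; lia.
split.
- by rewrite size_cat size_map; lia.
- rewrite cat_uniq (map_inj_uniq (can_inj revK)) uniq_H andbT /=.
  by apply/hasPn => _ /mapP [w w_H ->]; apply: rev_H.
- rewrite all_cat all_map perm_H; apply/allP => w w_H /=.
  by rewrite /is_perm_word perm_rev; apply: (allP perm_H).
- move=> i; rewrite size_cat size_map => lt_i.
  case: (ltngtP i.+1 (size H)) => [lt_iH | gt_iH | eq_iH].
  + by rewrite !nth_cat lt_iH (ltnW lt_iH); apply: adj_H.
  + have ge_iH : size H <= i by [].
    rewrite !nth_cat ltnNge ge_iH ltnNge (leqW ge_iH) /= !(nth_map [::]); try lia.
    by rewrite subSn //; apply/adj_transp_rev/adj_H; lia.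
  + have -> : i = (size H).-1 by lia.
    by rewrite !nth_cat prednK // leqnn ltnn subnn nth_last (nth_map [::]) // nth0.
- move=> i; rewrite half => lt_i.
  by rewrite nth_cat ltnNge leq_addl /= addnK nth_cat lt_i (nth_map [::]).
Qed.

Lemma iota_rcons a n : iota a n.+1 = rcons (iota a n) (a + n).
Proof. by rewrite -cats1 -addn1 iotaD. Qed.

Lemma last_iota_map (T : Type) x0 (f : nat -> T) n : last x0 [seq f k | k <- iota 0 n.+1] = f n.
Proof. by rewrite iota_rcons map_rcons last_rcons. Qed.

Lemma sorted_iota (e : rel nat) a n : (forall k, e k k.+1) -> sorted e (iota a n).
Proof.
move=> e_succ; elim: n a => // n IH a; case: n IH => // n IH.
by rewrite /= e_succ; apply: IH.
Qed.

Section Snake.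
Variable T : Type.
Implicit Types (s : seq T) (ss : seq (seq T)).

Lemma head_rev x0 s : head x0 (rev s) = last x0 s.
Proof. by case/lastP: s => // s x; rewrite rev_rcons last_rcons. Qed.

Lemma last_rev x0 s : last x0 (rev s) = head x0 s.
Proof. by case: s => // x s; rewrite rev_cons last_rcons. Qed.

Lemma sorted_cat_link (e : rel T) x0 s t : sorted e s -> sorted e t -> 0 < size s ->
  e (last x0 s) (head x0 t) -> sorted e (s ++ t).
Proof.
case: s => [|x s] //; case: t => [|y t] /=; first by rewrite cats0.
by move=> p_s p_t _ link; rewrite cat_path p_s /= link.
Qed.

Fixpoint snake (b : bool) ss : seq T :=
  if ss is s :: ss' then (if b then rev s else s) ++ snake (~~ b) ss' else [::].

Lemma snake_rcons b ss s :
  snake b (rcons ss s) = snake b ss ++ (if b (+) odd (size ss) then rev s else s).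
Proof.
elim: ss b => [|s' ss IH] b /=; first by rewrite cats0 addbF.
by rewrite IH catA; case: b; case: (odd _).
Qed.

Lemma head_snake x0 b s ss : 0 < size s ->
  head x0 (snake b (s :: ss)) = if b then last x0 s else head x0 s.
Proof.
by case: s => // x s _; case: b; rewrite //= -nth0 nth_cat size_rev /= nth0 head_rev.
Qed.

Lemma last_snake x0 b ss s : 0 < size s ->
  last x0 (snake b (rcons ss s)) = if b (+) odd (size ss) then head x0 s else last x0 s.
Proof.
by rewrite snake_rcons last_cat; case: ifP => _; rewrite ?last_rev; case: s.
Qed.

(* Consecutive rows are traversed in opposite directions, so they must be linked at both ends. *)
Lemma sorted_snake (e : rel T) x0 b ss : symmetric e ->
  all (fun s => sorted e s && (0 < size s)) ss ->
  sorted e [seq head x0 s | s <- ss] -> sorted e [seq last x0 s | s <- ss] ->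
  sorted e (snake b ss).
Proof.
move=> e_sym; have sorted_if (c : bool) s : sorted e s -> sorted e (if c then rev s else s).
  by case: c => // e_s; rewrite rev_sorted; apply: sub_sorted e_s => x y; rewrite e_sym.
elim: ss b => [|s ss IH] b //= /andP [/andP [e_s s_gt0] e_ss].
case: ss IH e_ss => [_ _ _ _|s' ss IH e_ss /andP [e_hd heads] /andP [e_lst lasts]].
  by rewrite cats0 sorted_if.
apply: (@sorted_cat_link e x0) (sorted_if _ _ e_s) (IH _ e_ss heads lasts) _ _.
  by case: b; rewrite ?size_rev.
move: e_ss => /= /andP [/andP [_ s'_gt0] _].
by rewrite head_snake //; case: b; rewrite /= ?last_rev.
Qed.

End Snake.

Lemma perm_snake (T : eqType) b (ss : seq (seq T)) : perm_eq (snake b ss) (flatten ss).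
Proof.
elim: ss b => //= s ss IH b; apply: perm_cat (IH _).
by case: b; rewrite ?perm_rev.
Qed.

(* Point (i, k) stands for L_i with the new letter inserted at position k.  Moving to the next row keeps
   adjacency when the letter sits at either end, or, in the rows i = B, B+1, B+2 where property P makes
   L_(i+1) the swap of L_i at positions B+2-i and B+3-i, whenever k is not B+3-i, between the swapped letters. *)
Definition grid_step (m B : nat) (x y : nat * nat) : bool :=
  let: (i, k) := x in let: (i', k') := y in
  (i' == i) && (k' == k.+1)
  || [&& k' == k, i' == i.+1 & [|| k == 0, k == m | (B <= i < B + 3) && (k != B + 3 - i)]].

Definition grid_edge m B : rel (nat * nat) := fun x y => grid_step m B x y || grid_step m B y x.

Lemma grid_edge_sym m B : symmetric (grid_edge m B).
Proof. by move=> x y; rewrite /grid_edge orbC. Qed.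

Definition row_snake m B : seq (nat * nat) :=
  snake true [seq [seq (i, k) | k <- iota 0 m.+1] | i <- iota 0 B].

Definition column_snake m B : seq (nat * nat) :=
  snake false [seq [seq (B + c, k) | c <- iota 0 4] | k <- rev (iota 5 (m - 4))].

(* A Hamiltonian path of the block [B, B+4) x [0, 4] from (B, 4) to (B+3, 0). *)
Definition corner B : seq (nat * nat) :=
  [seq (B + x.1, x.2) | x <- [:: (0, 4); (0, 3); (0, 2); (0, 1); (0, 0); (1, 0); (2, 0);
     (2, 1); (1, 1); (1, 2); (1, 3); (1, 4); (2, 4); (3, 4); (3, 3); (2, 3); (2, 2);
     (3, 2); (3, 1); (3, 0)]].

Definition grid_path m B : seq (nat * nat) := row_snake m B ++ column_snake m B ++ corner B.

Section GridPath.
Variables m B : nat.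

Lemma mem_row_snake i k : ((i, k) \in row_snake m B) = (i < B) && (k <= m).
Proof.
rewrite (perm_mem (perm_snake _ _)).
apply/flatten_mapP/andP => [[i' + /mapP [k' + [-> ->]]]|[lt_i le_k]].
  by rewrite !mem_iota /=; lia.
by exists i; rewrite ?mem_iota; last (apply/mapP; exists k; rewrite ?mem_iota //); lia.
Qed.

Lemma mem_column_snake i k :
  ((i, k) \in column_snake m B) = (B <= i < B + 4) && (5 <= k <= m).
Proof.
rewrite (perm_mem (perm_snake _ _)).
apply/flatten_mapP/andP => [[k' + /mapP [c + [-> ->]]]|[le_i le_k]].
  by rewrite mem_rev !mem_iota /=; lia.
exists k; rewrite ?mem_rev ?mem_iota; last (apply/mapP; exists (i - B); rewrite ?mem_iota).
all: try (congr pair); lia.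
Qed.

Lemma corner_sub : all (fun x => (B <= x.1 < B + 4) && (x.2 <= 4)) (corner B).
Proof. by rewrite /=; lia. Qed.

Lemma size_row_snake : size (row_snake m B) = B * m.+1.
Proof. by rewrite (perm_size (perm_snake _ _)) size_allpairs !size_iota. Qed.

Lemma size_column_snake : size (column_snake m B) = (m - 4) * 4.
Proof. by rewrite (perm_size (perm_snake _ _)) size_allpairs size_rev !size_iota. Qed.

Lemma size_grid_path : 4 <= m -> size (grid_path m B) = (B + 4) * m.+1.
Proof. by rewrite !size_cat size_row_snake size_column_snake /=; lia. Qed.

Lemma grid_path_sub x : 4 <= m -> x \in grid_path m B -> (x.1 < B + 4) && (x.2 <= m).
Proof.
case: x => i k m_ge4; rewrite !mem_cat mem_row_snake mem_column_snake.
by move=> /or3P [|| /(allP corner_sub)] /=; lia.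
Qed.

Lemma uniq_row_snake : uniq (row_snake m B).
Proof.
rewrite (perm_uniq (perm_snake _ _)) allpairs_uniq ?iota_uniq //.
by move=> [? ?] [? ?] _ _ [-> ->].
Qed.

Lemma uniq_column_snake : uniq (column_snake m B).
Proof.
rewrite (perm_uniq (perm_snake _ _)) allpairs_uniq ?rev_uniq ?iota_uniq //.
by move=> [? ?] [? ?] _ _ [/addnI -> ->].
Qed.

Lemma uniq_corner : uniq (corner B).
Proof. by rewrite map_inj_uniq // => -[? ?] [? ?] [/addnI -> ->]. Qed.

Lemma uniq_grid_path : uniq (grid_path m B).
Proof.
rewrite !cat_uniq uniq_row_snake uniq_column_snake uniq_corner !andbT !andTb.
apply/andP; split; apply/hasPn => -[i k].
  by rewrite mem_cat mem_row_snake mem_column_snake => /orP [|/(allP corner_sub)] /=; lia.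
by move=> /(allP corner_sub); rewrite mem_column_snake /=; lia.
Qed.

Lemma sorted_row_snake : sorted (grid_edge m B) (row_snake m B).
Proof.
apply: (sorted_snake (x0 := (0, 0)) _ (grid_edge_sym m B)).
- apply/allP => _ /mapP [i _ ->]; rewrite size_map size_iota andbT sorted_map.
  by apply: sorted_iota => k; rewrite /grid_edge /=; lia.
- rewrite -map_comp (@eq_map _ _ _ (fun i => (i, 0))) // sorted_map.
  by apply: sorted_iota => i; rewrite /grid_edge /=; lia.
- rewrite -map_comp (@eq_map _ _ _ (fun i => (i, m))) => [|i]; last exact: last_iota_map.
  by rewrite sorted_map; apply: sorted_iota => i; rewrite /grid_edge /=; lia.
Qed.

Lemma sorted_column_snake : sorted (grid_edge m B) (column_snake m B).
Proof.
apply: (sorted_snake (x0 := (0, 0)) _ (grid_edge_sym m B)).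
- apply/allP => _ /mapP [k + ->]; rewrite mem_rev mem_iota => k_ge5.
  by rewrite /= /grid_edge /=; lia.
- rewrite -map_comp (@eq_map _ _ _ (fun k => (B, k))) => [|k]; last by rewrite /= addn0.
  by rewrite sorted_map rev_sorted; apply: sorted_iota => k; rewrite /grid_edge /=; lia.
- rewrite -map_comp (@eq_map _ _ _ (fun k => (B + 3, k))) //.
  by rewrite sorted_map rev_sorted; apply: sorted_iota => k; rewrite /grid_edge /=; lia.
Qed.

Lemma sorted_corner : sorted (grid_edge m B) (corner B).
Proof. by rewrite /=; repeat (apply/andP; split); rewrite /grid_edge /=; lia. Qed.

Lemma head_row_snake x0 : 0 < B -> head x0 (row_snake m B) = (0, m).
Proof.
by case: B => // B' _; rewrite /row_snake [iota 0 B'.+1]/= map_cons head_snake // last_iota_map.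
Qed.

Lemma last_row_snake x0 : 0 < B -> ~~ odd B -> last x0 (row_snake m B) = (B.-1, m).
Proof.
case: B => // B' _ B_even; have B'_odd : odd B' by lia.
by rewrite /row_snake (iota_rcons 0 B') map_rcons last_snake size_map size_iota // B'_odd last_iota_map.
Qed.

Lemma head_column_snake x0 : 5 <= m -> head x0 (column_snake m B) = (B, m).
Proof.
move=> m_ge5; rewrite /column_snake (_ : m - 4 = (m - 5).+1); last lia.
by rewrite (iota_rcons 5) rev_rcons map_cons head_snake //= addn0; congr pair; lia.
Qed.

Lemma last_column_snake x0 : 5 <= m -> ~~ odd m -> last x0 (column_snake m B) = (B, 5).
Proof.
move=> m_ge5 m_even; rewrite /column_snake (_ : m - 4 = (m - 5).+1); last lia.
rewrite [iota 5 _]/= rev_cons map_rcons last_snake // size_map size_rev size_iota.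
by rewrite (_ : odd (m - 5)) /= ?addn0 //; lia.
Qed.

Lemma sorted_grid_path : 5 <= m -> ~~ odd m -> 0 < B -> ~~ odd B ->
  sorted (grid_edge m B) (grid_path m B).
Proof.
move=> m_ge5 m_even B_gt0 B_even.
apply: (@sorted_cat_link _ _ (0, 0)).
- exact: sorted_row_snake.
- apply: (@sorted_cat_link _ _ (0, 0)); rewrite ?sorted_column_snake ?sorted_corner //.
    by rewrite size_column_snake; lia.
  by rewrite last_column_snake // /grid_edge /=; lia.
- by rewrite size_row_snake muln_gt0 B_gt0.
- rewrite last_row_snake // -nth0 nth_cat ifT ?nth0 ?head_column_snake ?size_column_snake //.
    by rewrite /grid_edge /=; lia.
  by lia.
Qed.

Lemma head_grid_path x0 : 0 < B -> head x0 (grid_path m B) = (0, m).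
Proof.
move=> B_gt0; rewrite -nth0 nth_cat ifT ?nth0 ?head_row_snake //.
by rewrite size_row_snake muln_gt0 B_gt0.
Qed.

Lemma last_grid_path x0 : last x0 (grid_path m B) = (B + 3, 0).
Proof. by rewrite /grid_path !last_cat. Qed.

End GridPath.

Lemma dvdn_fact_fact k m : k <= m -> k`! %| m`!.
Proof. by move=> le_km; rewrite (fact_split le_km) dvdn_mulr. Qed.

Lemma propertyP_swap m L i : 4 <= m -> propertyP m L ->
  m`! %/ 2 - 4 <= i < m`! %/ 2 - 1 ->
  nth [::] L i.+1 = swap_adj (m`! %/ 2 - 2 - i) (nth [::] L i).
Proof.
move=> m_ge4 [_ P1 P2 P3 P4]; have fact24 : 24 %| m`! := dvdn_fact_fact m_ge4.
have [h h_eq] : exists h, m`! %/ 2 = h.+4 by exists (m`! %/ 2 - 4); have := fact_gt0 m; lia.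
rewrite h_eq !subSS !subn0 in P1 P2 P3 P4 * => i_range.
have [->|[->|->]] : i = h \/ i = h.+1 \/ i = h.+2 by lia.
- by rewrite -addn2 addKn P1 P2.
- by rewrite subSS subSnn P2 P3.
- by rewrite subnn P3 P4.
Qed.

Section GridWord.
Variables (m : nat) (L : seq (seq nat)).
Hypothesis L_code : reverse_gray_code m L.

Definition grid_word (x : nat * nat) : seq nat := ins m.+1 x.2 (nth [::] L x.1).

Lemma is_perm_word_nth i : i < m`! -> is_perm_word m (nth [::] L i).
Proof. by case: L_code => size_L _ perm_L _ _ lt_i; apply: (allP perm_L); rewrite mem_nth ?size_L. Qed.

Lemma size_nth_code i : i < m`! -> size (nth [::] L i) = m.
Proof. by move/is_perm_word_nth/perm_size ->; rewrite size_iota. Qed.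

Lemma notin_nth_code i : i < m`! -> m.+1 \notin nth [::] L i.
Proof. by move/is_perm_word_nth/perm_mem ->; rewrite mem_iota; lia. Qed.

Lemma is_perm_word_grid_word x : x.1 < m`! -> is_perm_word m.+1 (grid_word x).
Proof. by move/is_perm_word_nth; apply: is_perm_word_ins. Qed.

Lemma grid_word_inj x y : x.1 < m`! -> y.1 < m`! -> x.2 <= m -> y.2 <= m ->
  grid_word x = grid_word y -> x = y.
Proof.
case: x y => i k [i' k'] /= lt_i lt_i' le_k le_k' eq_words.
have := ins_inj (notin_nth_code lt_i) (notin_nth_code lt_i').
rewrite !size_nth_code // => /(_ _ _ le_k le_k' eq_words) [<- eq_nth].
case: L_code => size_L uniq_L _ _ _.
by move/eqP: eq_nth; rewrite nth_uniq ?size_L // => /eqP ->.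
Qed.

Lemma rev_grid_word x : x.1 < m`! %/ 2 -> x.2 <= m ->
  rev (grid_word x) = grid_word (x.1 + m`! %/ 2, m - x.2).
Proof.
case: x => i k /= lt_i le_k; case: L_code => _ _ _ _ L_rev.
by rewrite /grid_word /= rev_ins ?size_nth_code ?L_rev //; lia.
Qed.

Lemma rev_grid_word_neq x y : x.1 < m`! %/ 2 -> y.1 < m`! %/ 2 -> x.2 <= m -> y.2 <= m ->
  rev (grid_word x) != grid_word y.
Proof.
move=> lt_x lt_y le_x le_y; rewrite rev_grid_word //; apply/eqP => eq_words.
suff eq_y : (x.1 + m`! %/ 2, m - x.2) = y by rewrite -eq_y /= in lt_y; lia.
by apply: (grid_word_inj _ _ _ _ eq_words) => /=; lia.
Qed.

Lemma grid_word_next_row i j k : i.+1 < m`! -> j.+1 < m -> k <= m -> k != j.+1 ->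
  nth [::] L i.+1 = swap_adj j (nth [::] L i) ->
  adj_transp (grid_word (i, k)) (grid_word (i.+1, k)).
Proof.
move=> lt_i lt_j le_k ne_k eq_next; rewrite /grid_word /= eq_next.
by apply: adj_transp_ins; rewrite ?size_nth_code; lia.
Qed.

Lemma grid_word_outer i k : i.+1 < m`! -> (k == 0) || (k == m) ->
  adj_transp (grid_word (i, k)) (grid_word (i.+1, k)).
Proof.
move=> lt_i k_outer; case: L_code => size_L _ _ L_adj _.
have [j [lt_j eq_next]] : adj_transp (nth [::] L i) (nth [::] L i.+1) by apply: L_adj; rewrite size_L.
rewrite size_nth_code in lt_j; last lia.
by apply: (grid_word_next_row _ lt_j) eq_next; lia.
Qed.

Hypothesis L_P : propertyP m L.
Hypothesis m_ge4 : 4 <= m.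

Lemma grid_step_adj x y : y.1 < m`! -> y.2 <= m ->
  grid_step m (m`! %/ 2 - 4) x y -> adj_transp (grid_word x) (grid_word y).
Proof.
case: x y => i k [i' k'] /= lt_i' le_k'.
case/orP => [/andP [/eqP ? /eqP ?] | /and3P [/eqP ? /eqP ? k_ok]]; subst.
  by rewrite /grid_word /=; apply: adj_transp_ins_succ; rewrite size_nth_code.
case/or3P: k_ok => [k_outer | k_outer | /andP [i_range ne_k]].
- by apply: grid_word_outer; rewrite ?k_outer.
- by apply: grid_word_outer; rewrite ?k_outer ?orbT.
- have fact24 : 24 %| m`! := dvdn_fact_fact m_ge4; have fact_pos := fact_gt0 m.
  apply: (grid_word_next_row (j := m`! %/ 2 - 2 - i)) (propertyP_swap m_ge4 L_P _); lia.
Qed.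

Lemma grid_edge_adj x y : x.1 < m`! -> y.1 < m`! -> x.2 <= m -> y.2 <= m ->
  grid_edge m (m`! %/ 2 - 4) x y -> adj_transp (grid_word x) (grid_word y).
Proof.
move=> lt_x lt_y le_x le_y /orP [/grid_step_adj | /grid_step_adj adj_yx]; first exact.
exact/adj_transp_sym/adj_yx.
Qed.

End GridWord.

Lemma reverse_gray_code_succ m L : 6 <= m -> ~~ odd m ->
  reverse_gray_code m L -> propertyP m L -> exists L', reverse_gray_code m.+1 L'.
Proof.
move=> m_ge6 m_even L_code L_P; have m_ge4 : 4 <= m by lia.
have fact24 : 24 %| m`! := dvdn_fact_fact m_ge4.
have fact_pos := fact_gt0 m.
set B := m`! %/ 2 - 4; set P := grid_path m B.
have B_gt0 : 0 < B by lia.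
have B_even : ~~ odd B by lia.
have P_sub i k : (i, k) \in P -> i < m`! %/ 2 /\ k <= m.
  by move/(grid_path_sub m_ge4) => /=; lia.
have /(sortedP (0, 0)) P_path := sorted_grid_path (ltnW m_ge6) m_even B_gt0 B_even.
exists (map (grid_word m L) P ++ map rev (map (grid_word m L) P)).
apply: reverse_gray_code_of_half.
- rewrite size_map size_grid_path // factS (_ : B + 4 = m`! %/ 2); last lia.
  by rewrite mulnAC (_ : m`! %/ 2 * 2 = m`!) 1?mulnC //; lia.
- apply/allP => _ /mapP [[i k] /P_sub [lt_i _] ->].
  by apply: is_perm_word_grid_word => //=; lia.
- rewrite map_inj_in_uniq ?uniq_grid_path // => -[i k] [i' k'] /P_sub [? ?] /P_sub [? ?].
  by apply: grid_word_inj => //=; lia.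
- move=> _ /mapP [[i k] /P_sub [lt_i le_k] ->]; apply/mapP => -[[i' k'] /P_sub [lt_i' le_k']].
  by apply/eqP/rev_grid_word_neq.
- move=> j; rewrite size_map => lt_j; rewrite !(nth_map (0, 0)) //; last lia.
  move: (mem_nth (0, 0) (ltnW lt_j)) (mem_nth (0, 0) lt_j) (P_path j lt_j).
  case: (nth _ _ j) => i k; case: (nth _ _ j.+1) => i' k' /P_sub [? ?] /P_sub [? ?].
  by apply: grid_edge_adj => //=; lia.
- have P_gt0 : 0 < size P by rewrite size_grid_path // muln_gt0; lia.
  rewrite -nth_last -nth0 size_map !(nth_map (0, 0)) ?prednK ?ltn_predL //.
  rewrite nth_last nth0 last_grid_path head_grid_path // (rev_grid_word L_code) /= ?add0n ?subnn; try lia.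
  rewrite (_ : m`! %/ 2 = (B + 3).+1); last lia.
  by apply: grid_word_outer => //; lia.
Qed.

(* For m = 4 the words of property P repeat letters (wP1 4 = 3 2 1 4 1 2), so no code has it. *)
Lemma propertyP_4_false L : reverse_gray_code 4 L -> ~ propertyP 4 L.
Proof.
case=> size_L _ perm_L _ _ [_ P1 _ _ _].
have : is_perm_word 4 (nth [::] L 8) by apply: (allP perm_L); rewrite mem_nth ?size_L.
by rewrite P1.
Qed.

Theorem theorem9 (n : nat) :
  n %% 4 = 1 -> 5 <= n ->
  (exists L, reverse_gray_code n.-1 L /\ propertyP n.-1 L) ->
  exists L, reverse_gray_code n L.
Proof.
move=> n_mod4 n_ge5 [L [L_code L_P]].
have [n_eq5 | n_ge9] : n = 5 \/ 9 <= n by lia.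
  by subst n; case: (propertyP_4_false L_code L_P).
have -> : n = n.-1.+1 by lia.
by apply: (reverse_gray_code_succ _ _ L_code L_P); lia.
Qed.
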